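(* The function $s \mapsto s\,\dfrac{\theta_3'(s)}{\theta_3(s)}$ is strictly increasing on $[1,\infty)$.
   Context: For $s>0$, $\theta_3(s) = \sum_{k\in\mathbb{Z}} e^{-\pi k^2 s}$. *)

From Stdlib Require Import Reals ZArith ClassicalEpsilon.
Open Scope R_scope.

Definition theta_term (s : R) (k : Z) : R := exp (- PI * (IZR k)^2 * s).

Definition theta_partial (s : R) (N : nat) : R :=
  sum_f_R0 (fun n => theta_term s (Z.of_nat n - Z.of_nat N)%Z) (2 * N).

(* theta_3(s) = sum_{k in Z} exp(-pi k^2 s), the limit of the symmetric
   partial sums (the series converges absolutely for s > 0). *)
Definition theta3 (s : R) : R :=
  epsilon (inhabits 0) (fun l => Un_cv (theta_partial s) l).

From Stdlib Require Import Reals Lra Lia Psatz ClassicalEpsilon.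
From Coquelicot Require Import Coquelicot.
Open Scope R_scope.

(* With the moments [S_k(s) = sum_(n>=0) n^(2k) e^(-pi n^2 s)] one has
   [theta_3 = 2 S_0 - 1] and, differentiating termwise, [S_k' = -pi S_(k+1)], so
   [s theta_3'/theta_3 = -2 pi s S_1 / theta_3] has derivative
   [2 pi ((pi s S_2 - S_1) theta_3 - 2 pi s S_1^2) / theta_3^2].
   For [s > 1] this is positive: [S_2 >= S_1 > 0], [theta_3 >= 1], [pi s > 3],
   and [S_1 <= 1/4] because [e^(-pi s) <= 1/8]. *)

Lemma exp_le_compat (x y : R) : x <= y -> exp x <= exp y.
Proof. intros [Hlt | ->]; [left; apply exp_increasing | right]; auto. Qed.

Lemma exp_nat_mul (n : nat) (x : R) : exp (INR n * x) = exp x ^ n.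
Proof.
  induction n as [| n IH].
  - simpl. rewrite Rmult_0_l; apply exp_0.
  - rewrite S_INR, Rmult_plus_distr_r, Rmult_1_l, exp_plus, IH. simpl. ring.
Qed.

Lemma exp_neg_mul_sq_le_pow (a : R) (n : nat) :
  0 <= a -> exp (- a * INR n ^ 2) <= exp (- a) ^ n.
Proof.
  intros Ha. rewrite <- exp_nat_mul. apply exp_le_compat.
  assert (INR n <= INR n ^ 2).
  { destruct n as [| n]; [simpl; lra |].
    pose proof (pos_INR n). rewrite S_INR. nra. }
  nra.
Qed.

Lemma mul_exp_neg_le_inv (b x : R) : 0 < b -> x * exp (- b * x) <= / b.
Proof.
  intros Hb.
  assert (Hinv : exp (b * x) * exp (- b * x) = 1).
  { rewrite <- exp_plus, <- exp_0. f_equal. ring. }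
  pose proof (exp_ineq1_le (b * x)). pose proof (exp_pos (- b * x)).
  apply Rmult_le_reg_l with b; [exact Hb |].
  rewrite Rinv_r by lra. nra.
Qed.

Lemma exp_neg_PI_le : exp (- PI) <= / 8.
Proof.
  assert (He : 2 <= exp 1) by (pose proof (exp_ineq1_le 1); lra).
  assert (H8 : 8 <= exp 3).
  { replace 3 with (INR 3 * 1) by (simpl; ring). rewrite exp_nat_mul. simpl. nra. }
  assert (exp 3 <= exp PI) by (apply exp_le_compat; pose proof PI_RGT_0; pose proof PI2_3_2; lra).
  rewrite exp_Ropp. apply Rinv_le_contravar; lra.
Qed.

Lemma Series_Un_cv (a : nat -> R) :
  ex_series a -> Un_cv (fun N => sum_f_R0 a N) (Series a).
Proof. intros Ha. apply is_series_Reals, Series_correct, Ha. Qed.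

Lemma sum_f_R0_le_Series (a : nat -> R) (N : nat) :
  (forall n, 0 <= a n) -> ex_series a -> sum_f_R0 a N <= Series a.
Proof.
  intros Ha Hex. apply growing_ineq; [| apply Series_Un_cv, Hex].
  intros n. simpl. pose proof (Ha (S n)). lra.
Qed.

Lemma CVU_series_dominated (f : nat -> R -> R) (g : R -> R) (M : nat -> R)
  (c : R) (d : posreal) :
  ex_series M ->
  (forall n y, Boule c d y -> Rabs (f n y) <= M n) ->
  (forall y, Boule c d y -> Un_cv (fun N => sum_f_R0 (fun n => f n y) N) (g y)) ->
  CVU (fun N y => sum_f_R0 (fun n => f n y) N) g c d.
Proof.
  intros HM Hdom Hcv eps Heps.
  destruct (Series_Un_cv M HM eps Heps) as [N HN].
  exists N. intros n y Hn Hy.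
  pose proof (sum_maj1 f M y (g y) (Series M) n (Hcv y Hy) (Series_Un_cv M HM)
                (fun m => Hdom m y Hy)) as Htail.
  specialize (HN n Hn). unfold Rdist in HN. rewrite Rabs_minus_sym in HN.
  eapply Rle_lt_trans; [exact Htail |].
  eapply Rle_lt_trans; [apply Rle_abs | exact HN].
Qed.

Lemma sum_f_R0_symmetric (h : Z -> R) (N : nat) :
  (forall z, h (- z)%Z = h z) ->
  sum_f_R0 (fun n => h (Z.of_nat n - Z.of_nat N)%Z) (2 * N) =
  2 * sum_f_R0 (fun n => h (Z.of_nat n)) N - h 0%Z.
Proof.
  intros Heven. induction N as [| N IH]; [simpl; ring |].
  replace (2 * S N)%nat with (S (S (2 * N))) by lia.
  rewrite decomp_sum by lia. rewrite Nat.pred_succ, tech5.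
  rewrite (sum_eq (fun i => h (Z.of_nat (S i) - Z.of_nat (S N))%Z)
                  (fun n => h (Z.of_nat n - Z.of_nat N)%Z))
    by (intros i _; f_equal; lia).
  rewrite IH, (tech5 _ N).
  replace (Z.of_nat 0 - Z.of_nat (S N))%Z with (- Z.of_nat (S N))%Z by lia.
  replace (Z.of_nat (S (S (2 * N))) - Z.of_nat (S N))%Z with (Z.of_nat (S N)) by lia.
  rewrite Heven. ring.
Qed.

Lemma strictly_increasing_of_derivative_pos (f f' : R -> R) (a : R) :
  (forall x, a <= x -> derivable_pt_lim f x (f' x)) ->
  (forall x, a < x -> 0 < f' x) ->
  forall s t, a <= s -> s < t -> f s < f t.
Proof.
  intros Hder Hpos s t Has Hst.
  destruct (MVT_cor2 f f' s t Hst) as [c [Hmvt Hc]].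
  { intros c Hc. apply Hder. lra. }
  assert (0 < f' c * (t - s)) by (apply Rmult_lt_0_compat; [apply Hpos |]; lra).
  lra.
Qed.

Definition moment_term (k : nat) (s : R) (n : nat) : R :=
  INR n ^ (2 * k) * exp (- PI * INR n ^ 2 * s).

Definition moment (k : nat) (s : R) : R := Series (moment_term k s).

Lemma moment_term_ge0 (k : nat) (s : R) (n : nat) : 0 <= moment_term k s n.
Proof.
  apply Rmult_le_pos; [apply pow_le, pos_INR | left; apply exp_pos].
Qed.

Lemma moment_term_antitone (k n : nat) (x y : R) :
  x <= y -> moment_term k y n <= moment_term k x n.
Proof.
  intros Hxy. apply Rmult_le_compat_l; [apply pow_le, pos_INR |].
  apply exp_le_compat. pose proof PI_RGT_0.
  assert (0 <= PI * INR n ^ 2) by (apply Rmult_le_pos; [lra | apply pow_le, pos_INR]).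
  nra.
Qed.

(* Split [exp (-pi n^2 s)] into [k+1] equal factors: [k] of them absorb [n^(2k)],
   the last one decays geometrically. *)
Lemma moment_term_le_geometric (k : nat) (s : R) (n : nat) : 0 < s ->
  moment_term k s n <=
  ((INR k + 1) / (PI * s)) ^ k * exp (- (PI * s / (INR k + 1))) ^ n.
Proof.
  intros Hs. pose proof PI_RGT_0.
  set (b := PI * s / (INR k + 1)).
  assert (Hk : 0 < INR k + 1) by (pose proof (pos_INR k); lra).
  assert (Hb : 0 < b) by (apply Rdiv_lt_0_compat; nra).
  set (m := INR n ^ 2).
  assert (Hsplit : exp (- PI * m * s) = exp (- b * m) ^ k * exp (- b * m)).
  { rewrite <- exp_nat_mul, <- exp_plus. f_equal. unfold b. field. lra. }
  assert (Hfactor : m * exp (- b * m) <= / b) by (apply mul_exp_neg_le_inv, Hb).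
  assert (Hdecay : exp (- b * m) <= exp (- b) ^ n)
    by (apply exp_neg_mul_sq_le_pow; lra).
  assert (Hinv : (INR k + 1) / (PI * s) = / b) by (unfold b; field; nra).
  unfold moment_term. fold m. rewrite Hsplit, Hinv.
  replace (INR n ^ (2 * k)) with (m ^ k) by (unfold m; rewrite <- pow_mult; reflexivity).
  rewrite <- Rmult_assoc, <- Rpow_mult_distr.
  pose proof (exp_pos (- b * m)).
  assert (0 <= m) by (apply pow_le, pos_INR).
  apply Rmult_le_compat; [apply pow_le; nra | lra | apply pow_incr; nra | exact Hdecay].
Qed.

Lemma ex_series_moment_term (k : nat) (s : R) : 0 < s -> ex_series (moment_term k s).
Proof.
  intros Hs. pose proof PI_RGT_0. pose proof (pos_INR k).
  set (r := exp (- (PI * s / (INR k + 1)))).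
  assert (Hr : Rabs r < 1).
  { rewrite Rabs_pos_eq by (left; apply exp_pos). rewrite <- exp_0.
    apply exp_increasing.
    assert (0 < PI * s / (INR k + 1)) by (apply Rdiv_lt_0_compat; nra). lra. }
  apply (@ex_series_le R_AbsRing R_CompleteNormedModule _ (fun n => ((INR k + 1) / (PI * s)) ^ k * r ^ n)).
  - intros n. change (norm (moment_term k s n)) with (Rabs (moment_term k s n)).
    rewrite Rabs_pos_eq by apply moment_term_ge0.
    apply moment_term_le_geometric, Hs.
  - apply (ex_series_scal_l (((INR k + 1) / (PI * s)) ^ k) (fun n => r ^ n)).
    apply ex_series_geom, Hr.
Qed.

Lemma moment_term_derive (k n : nat) (s : R) :
  derivable_pt_lim (fun y => moment_term k y n) s (- PI * moment_term (S k) s n).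
Proof.
  apply is_derive_Reals. unfold moment_term. auto_derive; [exact I |].
  replace (2 * S k)%nat with (k + (k + 0) + 2)%nat by lia.
  rewrite (pow_add _ (k + (k + 0)) 2).
  replace (INR n * (INR n * 1)) with (INR n ^ 2) by ring. ring.
Qed.

Lemma moment_partial_derive (k N : nat) (s : R) :
  derivable_pt_lim (fun y => sum_f_R0 (moment_term k y) N) s
    (sum_f_R0 (fun n => - PI * moment_term (S k) s n) N).
Proof.
  induction N as [| N IH]; [apply moment_term_derive |].
  apply derivable_pt_lim_plus; [exact IH | apply moment_term_derive].
Qed.

(* Termwise differentiation, the derived series being dominated on [(s/2, 3s/2)]
   by its (summable) value at [s/2]. *)
Lemma moment_derive (k : nat) (s : R) :
  0 < s -> derivable_pt_lim (moment k) s (- PI * moment (S k) s).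
Proof.
  intros Hs. pose proof PI_RGT_0.
  assert (Hd : 0 < s / 2) by lra.
  set (d := mkposreal _ Hd).
  assert (Hball : forall y, Boule s d y -> s / 2 < y).
  { intros y Hy. unfold Boule in Hy. simpl in Hy. apply Rabs_def2 in Hy. lra. }
  assert (Hscaled : forall y, 0 < y ->
    Un_cv (fun N => sum_f_R0 (fun n => - PI * moment_term (S k) y n) N)
          (- PI * moment (S k) y)).
  { intros y Hy. unfold moment. rewrite <- Series_scal_l.
    apply Series_Un_cv, (ex_series_scal_l (- PI) (moment_term (S k) y)).
    apply ex_series_moment_term, Hy. }
  apply (CVU_derivable (fun N y => sum_f_R0 (moment_term k y) N)
           (fun N y => sum_f_R0 (fun n => - PI * moment_term (S k) y n) N)
           (moment k) (fun y => - PI * moment (S k) y) s d).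
  - apply CVU_series_dominated with (M := fun n => PI * moment_term (S k) (s / 2) n).
    + apply (ex_series_scal_l PI (moment_term (S k) (s / 2))).
      apply ex_series_moment_term, Hd.
    + intros n y Hy. pose proof (moment_term_ge0 (S k) y n).
      pose proof (moment_term_antitone (S k) n (s / 2) y (Rlt_le _ _ (Hball y Hy))).
      rewrite Rabs_left1 by nra. nra.
    + intros y Hy. apply Hscaled. specialize (Hball y Hy). lra.
  - intros y Hy. apply Series_Un_cv, ex_series_moment_term. specialize (Hball y Hy). lra.
  - intros n y _. apply moment_partial_derive.
  - apply Boule_center.
Qed.

Lemma theta_partial_moment (s : R) (N : nat) :
  theta_partial s N = 2 * sum_f_R0 (moment_term 0 s) N - 1.
Proof.
  unfold theta_partial. rewrite sum_f_R0_symmetric.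
  - replace (theta_term s 0) with 1.
    2: { unfold theta_term. simpl. rewrite <- exp_0. f_equal. ring. }
    f_equal. f_equal. apply sum_eq. intros n _.
    unfold theta_term, moment_term. rewrite <- INR_IZR_INZ. simpl. ring.
  - intros z. unfold theta_term. rewrite opp_IZR. f_equal. ring.
Qed.

Lemma theta3_moment (s : R) : 0 < s -> theta3 s = 2 * moment 0 s - 1.
Proof.
  intros Hs.
  assert (Hcv : Un_cv (theta_partial s) (2 * moment 0 s - 1)).
  { apply is_lim_seq_Reals.
    apply (is_lim_seq_ext (fun N => 2 * sum_f_R0 (moment_term 0 s) N - 1)).
    { intros N. symmetry. apply theta_partial_moment. }
    apply is_lim_seq_minus'; [| apply is_lim_seq_const].
    apply (is_lim_seq_scal_l _ 2 (moment 0 s)).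
    apply is_lim_seq_Reals, Series_Un_cv, ex_series_moment_term, Hs. }
  unfold theta3. apply UL_sequence with (theta_partial s); [| exact Hcv].
  apply epsilon_spec. exists (2 * moment 0 s - 1). exact Hcv.
Qed.

Lemma theta3_derive (s : R) :
  0 < s -> derivable_pt_lim theta3 s (- 2 * PI * moment 1 s).
Proof.
  intros Hs. apply is_derive_Reals.
  apply (is_derive_ext_loc (fun y => 2 * moment 0 y - 1)).
  - apply (filter_imp (fun y => 0 < y)); [| apply open_gt, Hs].
    intros y Hy. symmetry. apply theta3_moment, Hy.
  - replace (- 2 * PI * moment 1 s) with (2 * (- PI * moment 1 s) - 0) by ring.
    apply is_derive_Reals, derivable_pt_lim_minus; [| apply derivable_pt_lim_const].
    apply derivable_pt_lim_scal, moment_derive, Hs.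
Qed.

Lemma moment0_ge1 (s : R) : 0 < s -> 1 <= moment 0 s.
Proof.
  intros Hs.
  eapply Rle_trans; [| apply (sum_f_R0_le_Series _ 0);
                       [apply moment_term_ge0 | apply ex_series_moment_term, Hs]].
  unfold moment_term. simpl. rewrite Rmult_0_l, Rmult_0_r, Rmult_0_l, exp_0. lra.
Qed.

Lemma moment1_gt0 (s : R) : 0 < s -> 0 < moment 1 s.
Proof.
  intros Hs.
  eapply Rlt_le_trans; [| apply (sum_f_R0_le_Series _ 1);
                         [apply moment_term_ge0 | apply ex_series_moment_term, Hs]].
  unfold moment_term. simpl. pose proof (exp_pos (- PI * (1 * (1 * 1)) * s)). lra.
Qed.

Lemma moment_le_succ (k : nat) (s : R) :
  (0 < k)%nat -> 0 < s -> moment k s <= moment (S k) s.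
Proof.
  intros Hk Hs. apply Series_le; [| apply ex_series_moment_term, Hs].
  intros n. split; [apply moment_term_ge0 |].
  unfold moment_term. apply Rmult_le_compat_r; [left; apply exp_pos |].
  replace (2 * S k)%nat with (2 * k + 2)%nat by lia. rewrite pow_add.
  destruct n as [| n]; [simpl INR; rewrite !pow_i by lia; lra |].
  assert (1 <= INR (S n) ^ 2) by (rewrite S_INR; pose proof (pos_INR n); nra).
  pose proof (pow_le (INR (S n)) (2 * k) (pos_INR _)). nra.
Qed.

Lemma succ_sq_le_pow4 (n : nat) : (INR n + 1) ^ 2 <= 4 ^ n.
Proof.
  induction n as [| n IH]; [simpl; lra |].
  rewrite S_INR. pose proof (pos_INR n). simpl pow in *. nra.
Qed.

(* With [r = e^(-pi s) <= 1/8]: [(n+1)^2 e^(-pi (n+1)^2 s) <= r (n+1)^2 r^n <= r 2^(-n)]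
   since [(n+1)^2 <= 4^n], and the [n = 0] term vanishes. *)
Lemma moment1_le_quarter (s : R) : 1 <= s -> moment 1 s <= / 4.
Proof.
  intros Hs. pose proof PI_RGT_0.
  set (r := exp (- (PI * s))).
  assert (Hr : 0 < r <= / 8).
  { split; [apply exp_pos |]. eapply Rle_trans; [| apply exp_neg_PI_le].
    apply exp_le_compat. nra. }
  assert (Hex : ex_series (moment_term 1 s)) by (apply ex_series_moment_term; lra).
  assert (Hgeom : Series (fun n => r * (/ 2) ^ n) = 2 * r).
  { rewrite Series_scal_l, Series_geom by (rewrite Rabs_pos_eq; lra). field. }
  unfold moment. rewrite Series_incr_1 by exact Hex.
  replace (moment_term 1 s 0) with 0 by (unfold moment_term; simpl; ring).
  apply Rle_trans with (0 + Series (fun n => r * (/ 2) ^ n)); [| lra].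
  apply Rplus_le_compat_l, Series_le.
  2: { apply (ex_series_scal_l r (fun n => (/ 2) ^ n)), ex_series_geom.
       rewrite Rabs_pos_eq; lra. }
  intros n. split; [apply moment_term_ge0 |].
  unfold moment_term. replace (2 * 1)%nat with 2%nat by reflexivity.
  assert (Hdecay : exp (- PI * INR (S n) ^ 2 * s) <= r ^ S n).
  { replace (- PI * INR (S n) ^ 2 * s) with (- (PI * s) * INR (S n) ^ 2) by ring.
    apply exp_neg_mul_sq_le_pow. nra. }
  assert (Hpow : (INR n + 1) ^ 2 * r ^ n <= (/ 2) ^ n).
  { replace (/ 2) with (4 * / 8) by field. rewrite Rpow_mult_distr.
    apply Rmult_le_compat; [apply pow_le; pose proof (pos_INR n); lra
                           | apply pow_le; lra | apply succ_sq_le_pow4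
                           | apply pow_incr; lra]. }
  rewrite S_INR in *. simpl pow in Hdecay |- *. simpl pow in Hpow.
  pose proof (pow_le r n (Rlt_le _ _ (proj1 Hr))).
  assert (0 <= (INR n + 1) * ((INR n + 1) * 1)) by (pose proof (pos_INR n); nra).
  nra.
Qed.

Lemma log_derivative_numerator_pos (x th m1 m2 : R) :
  3 < x -> 1 <= th -> 0 < m1 <= / 4 -> m1 <= m2 ->
  0 < (x * m2 - m1) * th - 2 * x * m1 ^ 2.
Proof.
  intros Hx Hth Hm1 Hm12.
  assert (Hlin : (x - 1) * m1 <= (x * m2 - m1) * th).
  { assert (x * m1 <= x * m2) by (apply Rmult_le_compat_l; lra).
    assert (0 <= (x - 1) * m1) by (apply Rmult_le_pos; lra).
    assert ((x * m2 - m1) * 1 <= (x * m2 - m1) * th) by (apply Rmult_le_compat_l; lra).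
    lra. }
  assert (Hquad : 2 * x * m1 ^ 2 <= x * m1 / 2).
  { assert (0 <= x * m1 * (/ 2 - 2 * m1)) by (apply Rmult_le_pos; nra). nra. }
  nra.
Qed.

Definition scaled_log_derivative (s : R) : R :=
  s * (- 2 * PI * moment 1 s) / (2 * moment 0 s - 1).

Lemma scaled_log_derivative_derive (s : R) : 0 < s ->
  derivable_pt_lim scaled_log_derivative s
    (2 * PI * ((PI * s * moment 2 s - moment 1 s) * (2 * moment 0 s - 1)
               - 2 * (PI * s) * moment 1 s ^ 2) / (2 * moment 0 s - 1) ^ 2).
Proof.
  intros Hs.
  assert (Hnum : derivable_pt_lim (fun y => y * (- 2 * PI * moment 1 y)) s
                   (1 * (- 2 * PI * moment 1 s) + s * (- 2 * PI * (- PI * moment 2 s)))).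
  { apply (derivable_pt_lim_mult id (fun y => - 2 * PI * moment 1 y));
      [apply derivable_pt_lim_id |].
    apply (derivable_pt_lim_scal (moment 1)), moment_derive, Hs. }
  assert (Hden : derivable_pt_lim (fun y => 2 * moment 0 y - 1) s
                   (2 * (- PI * moment 1 s) - 0)).
  { apply (derivable_pt_lim_minus (fun y => 2 * moment 0 y)).
    - apply (derivable_pt_lim_scal (moment 0)), moment_derive, Hs.
    - apply derivable_pt_lim_const. }
  assert (Hth : 2 * moment 0 s - 1 <> 0) by (pose proof (moment0_ge1 s Hs); lra).
  pose proof (derivable_pt_lim_div _ _ _ _ _ Hnum Hden Hth) as Hquot.
  unfold scaled_log_derivative.
  match goal with |- derivable_pt_lim _ _ ?l => replace l with
    ((( 1 * (- 2 * PI * moment 1 s) + s * (- 2 * PI * (- PI * moment 2 s)))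
       * (2 * moment 0 s - 1) - (2 * (- PI * moment 1 s) - 0) * (s * (- 2 * PI * moment 1 s)))
     / Rsqr (2 * moment 0 s - 1)) by (unfold Rsqr; field; exact Hth) end.
  exact Hquot.
Qed.

Lemma scaled_log_derivative_increasing (s t : R) :
  1 <= s -> s < t -> scaled_log_derivative s < scaled_log_derivative t.
Proof.
  apply strictly_increasing_of_derivative_pos with (1 := fun x Hx =>
    scaled_log_derivative_derive x (Rlt_le_trans 0 1 x Rlt_0_1 Hx)).
  intros x Hx. assert (Hx0 : 0 < x) by lra. pose proof PI_RGT_0.
  apply Rdiv_lt_0_compat; [| apply pow_lt; pose proof (moment0_ge1 x Hx0); lra].
  apply Rmult_lt_0_compat; [lra |].
  apply log_derivative_numerator_pos.
  - pose proof PI2_3_2. nra.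
  - pose proof (moment0_ge1 x Hx0). lra.
  - split; [apply moment1_gt0, Hx0 | apply moment1_le_quarter; lra].
  - apply moment_le_succ; [lia | exact Hx0].
Qed.

Theorem mainTheorem10 (th' : R -> R)
  (Hder : forall s, 0 < s -> derivable_pt_lim theta3 s (th' s)) :
  forall s t, 1 <= s -> s < t ->
    s * th' s / theta3 s < t * th' t / theta3 t.
Proof.
  assert (Hscaled : forall y, 0 < y -> y * th' y / theta3 y = scaled_log_derivative y).
  { intros y Hy. unfold scaled_log_derivative.
    rewrite (theta3_moment y Hy),
            (uniqueness_limite theta3 y _ _ (Hder y Hy) (theta3_derive y Hy)).
    reflexivity. }
  intros s t Hs Hst. rewrite !Hscaled by lra.
  apply scaled_log_derivative_increasing; assumption.
Qed.
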